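(* For every $n\in\mathbb{N}$, every (not necessarily linear) weak-2-local derivation $\Delta: M_n\to M_n$ on the C$^*$-algebra $M_n=M_n(\mathbb{C})$ of complex $n\times n$ matrices is a linear derivation.
   Context: A derivation on a C$^*$-algebra $A$ is a linear map $D:A\to A$ with $D(ab)=D(a)b+aD(b)$. A (not necessarily linear) map $\Delta:A\to A$ is a weak-2-local derivation if for every $a,b\in A$ and every $\phi\in A^*$ there exists a derivation $D_{a,b,\phi}:A\to A$ such that $\phi\Delta(a)=\phi D_{a,b,\phi}(a)$ and $\phi\Delta(b)=\phi D_{a,b,\phi}(b)$. *)

From HB Require Import structures.
From mathcomp Require Import all_boot all_order all_algebra.
From mathcomp Require Import complex.
From mathcomp Require Import reals.
Set Implicit Arguments. Unset Strict Implicit. Unset Printing Implicit Defensive.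
Import Order.TTheory GRing.Theory Num.Theory.
Local Open Scope ring_scope.

Definition Clinear (R : realType) (V W : lmodType R[i]) (f : V -> W) : Prop :=
  forall (c : R[i]) (x y : V), f (c *: x + y) = c *: f x + f y.

Definition is_derivation (R : realType) (n : nat)
    (D : 'M[R[i]]_n -> 'M[R[i]]_n) : Prop :=
  Clinear (D : 'M[R[i]]_n -> 'M[R[i]]_n) /\
  forall a b : 'M[R[i]]_n, D (a *m b) = D a *m b + a *m D b.

(* Dual space of M_n(C): M_n is finite dimensional, so every linear
   functional is continuous and A^* is the space of all C-linear maps
   M_n(C) -> C. *)
Definition is_functional (R : realType) (n : nat) (phi : 'M[R[i]]_n -> R[i]) : Prop :=
  forall (c : R[i]) (x y : 'M[R[i]]_n), phi (c *: x + y) = c * phi x + phi y.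

Definition weak_2_local_derivation (R : realType) (n : nat)
    (Delta : 'M[R[i]]_n -> 'M[R[i]]_n) : Prop :=
  forall (a b : 'M[R[i]]_n) (phi : 'M[R[i]]_n -> R[i]),
    is_functional phi ->
    exists D : 'M[R[i]]_n -> 'M[R[i]]_n,
      is_derivation D /\ phi (Delta a) = phi (D a) /\ phi (Delta b) = phi (D b).

(* Every derivation of M_n is inner, so testing weak-2-locality against the
   functionals x |-> tr (x c) yields, for all a, b, c, a single commutator
   [z, _] agreeing with Delta at a and at b against c.  With a = b this gives
   tr (Delta a c) = 0 whenever a and c commute; testing a and c against c + a
   gives the skew-symmetry tr (Delta a c) = - tr (Delta c a), which already
   forces linearity.  Put z0 := sum_k Delta (E_k0) E_0k, which recovers z
   modulo scalars when Delta = [z, _].  Then f := Delta - [z0, _] is linear,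
   skew, kills commuting pairs and satisfies tr (f E_p0 E_0q) = 0; from
   commuting combinations of matrix units one gets tr (f E_ij E_kl) = 0 for all
   indices, i.e. f = 0, so Delta is the inner derivation [z0, _]. *)

From HB Require Import structures.
From mathcomp Require Import all_boot all_order all_algebra.
From mathcomp Require Import complex reals.
Set Implicit Arguments. Unset Strict Implicit. Unset Printing Implicit Defensive.
Import GRing.Theory.
Local Open Scope ring_scope.

Section Commutators.
Variables (K : comPzRingType) (n : nat).
Implicit Types (a b c z : 'M[K]_n) (i j : 'I_n).

Lemma mxtrace_mul_delta a i j : \tr (a *m delta_mx j i) = a i j.
Proof.
rewrite /mxtrace (bigD1 i) //= big1 ?addr0 => [|k /negPf ki].
  rewrite !mxE (bigD1 j) //= big1 ?addr0 => [|l /negPf lj]; rewrite !mxE ?eqxx.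
    by rewrite mulr1.
  by rewrite lj mulr0.
by rewrite !mxE big1 // => l _; rewrite mxE ki andbF mulr0.
Qed.

Lemma linear_delta_eq (V : lmodType K) (f g : {linear 'M[K]_n -> V}) :
  (forall i j, f (delta_mx i j) = g (delta_mx i j)) -> f =1 g.
Proof.
move=> fg a; rewrite (matrix_sum_delta a) !linear_sum; apply: eq_bigr => i _.
by rewrite !linear_sum; apply: eq_bigr => j _; rewrite !linearZ fg.
Qed.

Definition ad z a := z *m a - a *m z.
Arguments ad : simpl never.

Lemma ad_is_linear z : linear (ad z).
Proof.
move=> c a b; rewrite /ad mulmxDr mulmxDl -scalemxAr -scalemxAl scalerBr.
by rewrite addrACA opprD.
Qed.

HB.instance Definition _ z :=
  GRing.isLinear.Build K 'M[K]_n 'M[K]_n *:%R (ad z) (ad_is_linear z).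

Lemma adM z a b : ad z (a *m b) = ad z a *m b + a *m ad z b.
Proof. by rewrite /ad mulmxBl mulmxBr !mulmxA addrA subrK. Qed.

Lemma mxtrace_ad z a c : \tr (ad z a *m c) = \tr (z *m ad a c).
Proof.
rewrite /ad mulmxBl mulmxBr !raddfB /= !mulmxA; congr (_ - _).
by rewrite mxtrace_mulC mulmxA mxtrace_mulC mulmxA.
Qed.

Lemma mxtrace_ad_comm z a c : a *m c = c *m a -> \tr (ad z a *m c) = 0.
Proof. by move=> ac; rewrite mxtrace_ad /ad ac subrr mulmx0 mxtrace0. Qed.

Lemma mxtrace_ad_skew z a c : \tr (ad z a *m c) = - \tr (ad z c *m a).
Proof. by rewrite !mxtrace_ad /ad -(opprB (c *m a)) mulmxN raddfN. Qed.

End Commutators.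

Section InnerDerivations.
Variables (K : comPzRingType) (n : nat) (D : 'M[K]_n.+1 -> 'M[K]_n.+1).

Definition inner_center : 'M[K]_n.+1 := \sum_k D (delta_mx k 0) *m delta_mx 0 k.

Lemma inner_center_mul_delta (p q : 'I_n.+1) :
  inner_center *m delta_mx p q = D (delta_mx p 0) *m delta_mx 0 q.
Proof.
rewrite mulmx_suml (bigD1 p) //= big1 ?addr0 => [|k /negPf kp].
  by rewrite -mulmxA mul_delta_mx.
by rewrite -mulmxA mul_delta_mx_cond kp mulmx0.
Qed.

Hypothesis D_linear : linear D.
Hypothesis D_leibniz : forall a b, D (a *m b) = D a *m b + a *m D b.

HB.instance Definition _ := GRing.isLinear.Build K _ _ _ D D_linear.

Lemma derivation_inner : D =1 ad inner_center.
Proof.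
apply: linear_delta_eq => i j.
have leibniz_unit k : delta_mx i j *m (D (delta_mx k 0) *m delta_mx 0 k)
    = D (delta_mx i j *m delta_mx k 0) *m delta_mx 0 k - D (delta_mx i j) *m delta_mx k k.
  by rewrite D_leibniz mulmxDl -!mulmxA mul_delta_mx addrAC subrr add0r.
rewrite /= /ad inner_center_mul_delta mulmx_sumr.
under eq_bigr do rewrite leibniz_unit.
rewrite sumrB -mulmx_sumr -mx1_sum_delta mulmx1 (bigD1 j) //= big1 ?addr0.
  by rewrite mul_delta_mx opprB addrC subrK.
by move=> k /negPf kj; rewrite mul_delta_mx_cond eq_sym kj raddf0 mul0mx.
Qed.

End InnerDerivations.

Section SkewFormVanishing.
Variables (K : comPzRingType) (n : nat) (f : 'M[K]_n.+1 -> 'M[K]_n.+1).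
Hypothesis f_linear : linear f.
Hypothesis f_skew : forall a c, \tr (f a *m c) = - \tr (f c *m a).
Hypothesis f_comm : forall a c, a *m c = c *m a -> \tr (f a *m c) = 0.
Hypothesis f_normal : forall p q, \tr (f (delta_mx p 0) *m delta_mx 0 q) = 0.

HB.instance Definition _ := GRing.isLinear.Build K _ _ _ f f_linear.

Local Notation E := (@delta_mx K n.+1 n.+1).

Lemma mxtrace_delta_disjoint i j k l :
  j != k -> l != i -> \tr (f (E i j) *m E k l) = 0.
Proof. by move=> jk li; apply: f_comm; rewrite !mul_delta_mx_0. Qed.

Lemma mxtrace_delta_chain i j l : l != i -> \tr (f (E i j) *m E j l) = 0.
Proof.
move=> li; have [->|j0] := eqVneq j 0; first exact: f_normal.
have j0' : 0 != j by rewrite eq_sym.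
have comm_units : (E i j + E i 0) *m (E j l - E 0 l) = (E j l - E 0 l) *m (E i j + E i 0).
  rewrite mulmxDl !mulmxBr mulmxBl !mulmxDr !mul_delta_mx !mul_delta_mx_0 //.
  by rewrite subr0 add0r subrr !addr0 subrr.
have := f_comm comm_units; rewrite (raddfD f) mulmxDl !mulmxBr !mxtraceD !raddfN /=.
rewrite (mxtrace_delta_disjoint j0 li) (mxtrace_delta_disjoint j0' li) f_normal.
by rewrite !oppr0 !addr0.
Qed.

Lemma mxtrace_delta_cycle i j : \tr (f (E i j) *m E j i) = 0.
Proof.
have [<-|ij] := eqVneq i j; first exact: f_comm.
have [->|i0] := eqVneq i 0; first by rewrite f_skew f_normal oppr0.
have [->|j0] := eqVneq j 0; first exact: f_normal.
have ji : j != i by rewrite eq_sym.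
have i0' : 0 != i by rewrite eq_sym.
have j0' : 0 != j by rewrite eq_sym.
pose P := E i j + E j 0 + E 0 i.
have PP : P *m P = E i 0 + E j i + E 0 j.
  rewrite !(mulmxDl, mulmxDr) !mul_delta_mx !mul_delta_mx_0 //.
  by rewrite !(addr0, add0r).
have := f_comm (mulmxA P P P); rewrite PP !(raddfD f) !mulmxDl !mulmxDr !mxtraceD.
rewrite (mxtrace_delta_disjoint ji i0') (mxtrace_delta_disjoint j0 ji).
rewrite (mxtrace_delta_disjoint i0' j0') (mxtrace_delta_disjoint j0' ij).
rewrite (mxtrace_delta_disjoint ij i0) (mxtrace_delta_disjoint i0 j0).
rewrite f_normal [\tr (f (E 0 i) *m _)]f_skew f_normal.
by rewrite oppr0 !(addr0, add0r).
Qed.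

Lemma mxtrace_delta_eq0 i j k l : \tr (f (E i j) *m E k l) = 0.
Proof.
have [<-|jk] := eqVneq j k; have [->|li] := eqVneq l i.
- exact: mxtrace_delta_cycle.
- exact: mxtrace_delta_chain.
- by rewrite f_skew mxtrace_delta_chain ?oppr0 // eq_sym.
- exact: mxtrace_delta_disjoint.
Qed.

Lemma skew_normal_eq0 a : f a = 0.
Proof.
apply: (@linear_delta_eq _ _ _ f \0) => i j; apply/matrixP => k l.
by rewrite !mxE -mxtrace_mul_delta mxtrace_delta_eq0.
Qed.

End SkewFormVanishing.

(* Weak-2-locality as seen by the functionals x |-> tr (x c), which exhaust the
   dual of M_n, with derivations replaced by the commutators representing them. *)
Definition tr_2_local_inner (K : comPzRingType) n (Delta : 'M[K]_n -> 'M[K]_n) :=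
  forall a b c : 'M[K]_n, exists z : 'M[K]_n,
    \tr (Delta a *m c) = \tr (ad z a *m c) /\ \tr (Delta b *m c) = \tr (ad z b *m c).

Section TraceLocalInner.
Variables (K : comPzRingType) (n : nat) (Delta : 'M[K]_n.+1 -> 'M[K]_n.+1).
Hypothesis Delta_local : tr_2_local_inner Delta.

Lemma tr_2_local_comm a c : a *m c = c *m a -> \tr (Delta a *m c) = 0.
Proof. by move=> ac; have [z [-> _]] := Delta_local a a c; apply: mxtrace_ad_comm. Qed.

Lemma tr_2_local_skew a c : \tr (Delta a *m c) = - \tr (Delta c *m a).
Proof.
have [z []] := Delta_local a c (c + a); rewrite !mulmxDr !mxtraceD.
rewrite (tr_2_local_comm (erefl (a *m a))) (tr_2_local_comm (erefl (c *m c))).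
rewrite (mxtrace_ad_comm z (erefl (a *m a))) (mxtrace_ad_comm z (erefl (c *m c))).
by rewrite !(addr0, add0r) => -> ->; apply: mxtrace_ad_skew.
Qed.

Lemma tr_2_local_linear : linear Delta.
Proof.
move=> k x y; apply/matrixP => i j; rewrite !mxE -!mxtrace_mul_delta.
rewrite !(tr_2_local_skew _ (delta_mx j i)) mulmxDr -scalemxAr mxtraceD mxtraceZ.
by rewrite opprD mulrN.
Qed.

HB.instance Definition _ := GRing.isLinear.Build K _ _ _ Delta tr_2_local_linear.

Lemma mxtrace_delta_inner_center (p q : 'I_n.+1) :
  \tr (delta_mx p 0 *m inner_center Delta *m delta_mx 0 q) = 0.
Proof.
rewrite mxtrace_mulC mulmxA mul_delta_mx_cond.
case: eqP => _; last by rewrite mulr0n mul0mx mxtrace0.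
by rewrite mulr1n mxtrace_mulC inner_center_mul_delta tr_2_local_comm.
Qed.

Lemma tr_2_local_inner_ad : Delta =1 ad (inner_center Delta).
Proof.
set z := inner_center Delta; move=> x; apply/eqP; rewrite -subr_eq0; apply/eqP.
have trB u v : \tr ((Delta \- ad z) u *m v) = \tr (Delta u *m v) - \tr (ad z u *m v).
  by rewrite /= mulmxBl raddfB.
apply: (skew_normal_eq0 (f := Delta \- ad z)) => [k | a c | a c ac | p q]; rewrite ?trB.
- exact: linearP.
- by rewrite tr_2_local_skew (mxtrace_ad_skew z a) opprD.
- by rewrite tr_2_local_comm // (mxtrace_ad_comm z ac) subrr.
- rewrite /ad mulmxBl -mulmxA mul_delta_mx inner_center_mul_delta raddfB /=.
  by rewrite opprB addrC subrK mxtrace_delta_inner_center.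
Qed.

End TraceLocalInner.

Lemma mxtrace_mulmxr_functional (R : realType) n (c : 'M[R[i]]_n) :
  is_functional (fun x => \tr (x *m c)).
Proof. by move=> k x y; rewrite mulmxDl -scalemxAl mxtraceD mxtraceZ. Qed.

Lemma weak_2_local_tr_2_local (R : realType) n (Delta : 'M[R[i]]_n.+1 -> 'M[R[i]]_n.+1) :
  weak_2_local_derivation Delta -> tr_2_local_inner Delta.
Proof.
move=> w2l a b c; have [D [[D_linear D_leibniz] [Da Db]]] :=
  w2l a b _ (mxtrace_mulmxr_functional c).
by exists (inner_center D); rewrite Da Db !(derivation_inner D_linear D_leibniz).
Qed.

Theorem theorem2p12 (R : realType) (n : nat) (Delta : 'M[R[i]]_n -> 'M[R[i]]_n) :
  weak_2_local_derivation Delta -> is_derivation Delta.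
Proof.
case: n Delta => [|n] Delta w2l.
  by split=> [c x y | a b]; apply/matrixP => -[].
have Delta_local := weak_2_local_tr_2_local w2l.
split=> [|a b]; first exact: tr_2_local_linear.
by rewrite !(tr_2_local_inner_ad Delta_local) adM.
Qed.
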